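(* Let $q\neq-1$ be real and $n\ge0$. Then $$T_n(x,s,q)=\sum_{k=0}^{\lfloor n/2\rfloor}q^{k^2}\frac{(1+q)\cdots(1+q^{n-1})}{(1+q)\cdots(1+q^{k})\cdot(1+q^{n-k})\cdots(1+q^{n-1})}\,\frac{[n]}{[n-k]}\begin{bmatrix} n-k\\ k\end{bmatrix}s^kx^{n-2k}$$ $$=\sum_{k=0}^{\lfloor (n-1)/2\rfloor}q^{k^2}(1+q^{k+1})\cdots(1+q^{n-k-1})\frac{[n]}{[n-k]}\begin{bmatrix} n-k\\ k\end{bmatrix}s^kx^{n-2k}+[n\equiv 0 \pmod 2]\,q^{(n/2)^2}s^{n/2}.$$
   Context: $T_0=1$, $T_1=x$, $T_n(x,s,q)=(1+q^{n-1})x\,T_{n-1}(x,s,q)+q^{n-1}s\,T_{n-2}(x,s,q)$ for $n\ge2$. Notation: $[m]=1+q+\cdots+q^{m-1}$, $[m]!=[1]\cdots[m]$, $\begin{bmatrix} m\\ j\end{bmatrix}=\frac{[m]!}{[j]![m-j]!}$; empty products equal $1$; $[P]$ is the Iverson bracket ($1$ if $P$ holds, $0$ otherwise). For $n=0$ the term $\frac{[n]}{[n-k]}$ with $k=0$ is read as $1$. *)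

From mathcomp Require Import all_boot all_order all_algebra.
Set Implicit Arguments. Unset Strict Implicit. Unset Printing Implicit Defensive.
Import Order.TTheory GRing.Theory Num.Theory.
Local Open Scope ring_scope.

Section Defs.
Variable R : realFieldType.

Fixpoint Tpoly (x s q : R) (n : nat) {struct n} : R :=
  match n with
  | 0 => 1
  | 1 => x
  | S (S m as p) => (1 + q ^+ p) * x * Tpoly x s q p + q ^+ p * s * Tpoly x s q m
  end.

Definition qint (q : R) (m : nat) : R := \sum_(i < m) q ^+ i.
Definition qfact (q : R) (m : nat) : R := \prod_(1 <= i < m.+1) qint q i.
Definition qbinom (q : R) (m j : nat) : R :=
  qfact q m / (qfact q j * qfact q (m - j)).
Definition qratio (q : R) (n k : nat) : R :=
  if n == 0%N then 1 else qint q n / qint q (n - k).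
End Defs.

(* The coefficient of s^k x^(n-2k) in T_n is
     q^(k^2) [n] (1+q)...(1+q^(n-k-1)) [n-k-1]! / ((1+q)...(1+q^k) [k]! [n-2k]!).
   Induction on n reduces this to the recurrence of T_n read off coefficientwise;
   after cancelling common factors, the only nontrivial case is a polynomial
   identity between q-integers ([qint_identity]), checked by writing
   [m] = (1 - q^m)/(1 - q).  Both displayed sums are rewritings of this closed form;
   the second one isolates the diagonal term q^(m^2) s^m when n = 2m.  The
   hypothesis q <> -1 is exactly what keeps every [m] (m > 0) and 1 + q^i nonzero. *)

From mathcomp Require Import all_boot all_order all_algebra ring lra zify.
Set Implicit Arguments. Unset Strict Implicit. Unset Printing Implicit Defensive.
Import Order.TTheory GRing.Theory Num.Theory.
Local Open Scope ring_scope.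

Section QCalculus.
Variables (R : realFieldType) (q : R).

Definition qpfact (m : nat) : R := \prod_(1 <= i < m.+1) (1 + q ^+ i).

Lemma qint0 : qint q 0 = 0.
Proof. by rewrite /qint big_ord0. Qed.

Lemma qintS a : qint q a.+1 = qint q a + q ^+ a.
Proof. by rewrite /qint big_ord_recr. Qed.

Lemma qintD a b : qint q (a + b) = qint q a + q ^+ a * qint q b.
Proof.
elim: b => [|b IHb]; first by rewrite addn0 qint0 mulr0 addr0.
by rewrite addnS !qintS IHb exprD; ring.
Qed.

Lemma qint1 a : qint (1 : R) a = a%:R.
Proof.
by rewrite /qint (eq_bigr (fun=> 1)) => [|i _]; rewrite ?expr1n // sumr_const card_ord.
Qed.

Lemma mulr_qint a : (1 - q) * qint q a = 1 - q ^+ a.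
Proof. by apply: oppr_inj; rewrite -mulNr !opprB subrX1. Qed.

Lemma qfact0 : qfact q 0 = 1.
Proof. by rewrite /qfact big_geq. Qed.

Lemma qfactS m : qfact q m.+1 = qfact q m * qint q m.+1.
Proof. by rewrite /qfact big_nat_recr. Qed.

Lemma qpfact0 : qpfact 0 = 1.
Proof. by rewrite /qpfact big_geq. Qed.

Lemma qpfactS m : qpfact m.+1 = qpfact m * (1 + q ^+ m.+1).
Proof. by rewrite /qpfact big_nat_recr. Qed.

Lemma eq_pm1_normX n : (0 < n)%N -> `|q| ^+ n = 1 -> q = 1 \/ q = -1.
Proof.
move=> n_gt0 /eqP; rewrite pexpr_eq1 ?normr_ge0 //.
by case: ger0P => _ /eqP; [left | move=> <-; right; rewrite opprK].
Qed.

Lemma qint_identity m k :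
  qint q (m + k + k).+3 * (1 + q ^+ (m + k).+1) * qint q (m + k).+1 =
  (1 + q ^+ (m + k + k).+2) * qint q (m + k + k).+2 * qint q m.+1
  + q ^+ m.+1 * qint q (m + k + k).+1 * (1 + q ^+ k.+1) * qint q k.+1.
Proof.
have [-> | q_neq1] := eqVneq q 1; first by rewrite !qint1 !expr1n -!natr1 !natrD; ring.
have subq_neq0 : 1 - q != 0 by rewrite subr_eq0 eq_sym.
have qintE a : qint q a = (1 - q ^+ a) / (1 - q) by rewrite -mulr_qint; field.
by rewrite !qintE !exprS !exprD; field.
Qed.

Hypothesis q_neqN1 : q != -1.

Lemma qint_neq0 a : (0 < a)%N -> qint q a != 0.
Proof.
move=> a_gt0; have [-> | q_neq1] := eqVneq q 1.
  by rewrite qint1 pnatr_eq0 -lt0n.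
apply: contra_neq q_neq1 => qint_eq0.
have qXa : q ^+ a = 1 by apply/eqP; rewrite -subr_eq0 -opprB -mulr_qint qint_eq0 mulr0 oppr0.
have normXa : `|q| ^+ a = 1 by rewrite -normrX qXa normr1.
by have [|/eqP] // := eq_pm1_normX a_gt0 normXa; rewrite (negPf q_neqN1).
Qed.

Lemma add1X_neq0 i : 1 + q ^+ i != 0.
Proof.
rewrite addrC addr_eq0; apply/eqP => qXi_eqN1.
have one_neqN1 : (1 : R) != -1 by rewrite -addr_eq0 (pnatr_eq0 R 2).
case: i qXi_eqN1 => [|i] qXi_eqN1; first by rewrite -qXi_eqN1 eqxx in one_neqN1.
have normXi : `|q| ^+ i.+1 = 1 by rewrite -normrX qXi_eqN1 normrN normr1.
have [q_eq1 | q_eqN1] := eq_pm1_normX (ltn0Sn i) normXi.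
  by rewrite -qXi_eqN1 q_eq1 expr1n eqxx in one_neqN1.
by move: q_neqN1; rewrite q_eqN1 eqxx.
Qed.

Lemma qfact_neq0 m : qfact q m != 0.
Proof.
rewrite /qfact prodf_seq_neq0; apply/allP => i; rewrite mem_index_iota => /andP[i_gt0 _].
exact: qint_neq0.
Qed.

Lemma qpfact_neq0 m : qpfact m != 0.
Proof. by rewrite /qpfact prodf_seq_neq0; apply/allP => i _; apply: add1X_neq0. Qed.

(* The coefficient of [s^k x^(n-2k)] in [T_n].  The general formula carries the
   factor [n], which vanishes at n = 0, whence the special case. *)
Definition tcoef (n k : nat) : R :=
  if (2 * k <= n)%N then
    if n == 0%N then 1 else
      q ^+ (k ^ 2) * qint q n * qpfact (n - k).-1 * qfact q (n - k).-1
        / (qpfact k * qfact q k * qfact q (n - 2 * k))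
  else 0.

Lemma tcoef_small n k : (n < 2 * k)%N -> tcoef n k = 0.
Proof. by rewrite /tcoef ltnNge => /negPf ->. Qed.

Lemma tcoefE n k : (2 * k <= n)%N -> (0 < n)%N ->
  tcoef n k = q ^+ (k ^ 2) * qint q n * qpfact (n - k).-1 * qfact q (n - k).-1
                / (qpfact k * qfact q k * qfact q (n - 2 * k)).
Proof. by rewrite /tcoef lt0n => -> /negPf ->. Qed.

Lemma tcoef0 n : tcoef n 0 = qpfact n.-1.
Proof.
case: n => [|n]; first by rewrite qpfact0.
rewrite tcoefE // !subn0 qpfact0 qfact0 qfactS.
by field; rewrite qfact_neq0 qint_neq0.
Qed.

Lemma tcoef_diag j : tcoef (2 * j) j = q ^+ (j ^ 2).
Proof.
case: j => [|j]; first by rewrite tcoef0 qpfact0.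
rewrite tcoefE // subnn qfact0.
have -> : (2 * j.+1 - j.+1).-1 = j by lia.
rewrite (_ : 2 * j.+1 = j.+1 + j.+1)%N ?qintD ?qpfactS ?qfactS; last by lia.
by field; rewrite qpfact_neq0 qfact_neq0 add1X_neq0 qint_neq0.
Qed.

Lemma tcoefSS_interior m k :
  tcoef (m + k + k).+3 k.+1 =
    (1 + q ^+ (m + k + k).+2) * tcoef (m + k + k).+2 k.+1
    + q ^+ (m + k + k).+2 * tcoef (m + k + k).+1 k.
Proof.
rewrite !tcoefE //; try lia.
have -> : ((m + k + k).+3 - k.+1).-1 = (m + k).+1 by lia.
have -> : ((m + k + k).+2 - k.+1).-1 = (m + k)%N by lia.
have -> : ((m + k + k).+3 - 2 * k.+1 = m.+1)%N by lia.
have -> : ((m + k + k).+2 - 2 * k.+1 = m)%N by lia.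
have -> : ((m + k + k).+1 - 2 * k = m.+1)%N by lia.
have -> : (k.+1 ^ 2 = k ^ 2 + (k + k).+1)%N by lia.
have -> : qint q (m + k + k).+3 =
    ((1 + q ^+ (m + k + k).+2) * qint q (m + k + k).+2 * qint q m.+1
     + q ^+ m.+1 * qint q (m + k + k).+1 * (1 + q ^+ k.+1) * qint q k.+1)
    / ((1 + q ^+ (m + k).+1) * qint q (m + k).+1).
  by rewrite -qint_identity; field; rewrite add1X_neq0 qint_neq0.
rewrite !qpfactS !qfactS !exprD !exprS !exprD.
by field; rewrite qpfact_neq0 !qfact_neq0 !qint_neq0 // -exprD -!exprS !add1X_neq0.
Qed.

Lemma tcoefSS n k :
  tcoef n.+2 k.+1 = (1 + q ^+ n.+1) * tcoef n.+1 k.+1 + q ^+ n.+1 * tcoef n k.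
Proof.
case: (ltngtP n (2 * k)) => [n_lt | n_gt | ->].
- by rewrite !tcoef_small ?mulr0 ?addr0 //; lia.
- have [m ->] : exists m, n = (m + k + k).+1 by exists (n - 2 * k).-1; lia.
  exact: tcoefSS_interior.
- rewrite (tcoef_small (_ : (2 * k).+1 < 2 * k.+1)%N) ?mulr0 ?add0r; last by lia.
  rewrite (_ : (2 * k).+2 = 2 * k.+1)%N ?tcoef_diag; last by lia.
  by rewrite (_ : (k.+1 ^ 2 = (2 * k).+1 + k ^ 2)%N) ?exprD //; lia.
Qed.

Lemma TpolySS x s n :
  Tpoly x s q n.+2 = (1 + q ^+ n.+1) * x * Tpoly x s q n.+1 + q ^+ n.+1 * s * Tpoly x s q n.
Proof. by []. Qed.

Lemma tcoef_monomialSS x s n k :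
  tcoef n.+2 k.+1 * s ^+ k.+1 * x ^+ (n.+2 - 2 * k.+1) =
    (1 + q ^+ n.+1) * x * (tcoef n.+1 k.+1 * s ^+ k.+1 * x ^+ (n.+1 - 2 * k.+1))
    + q ^+ n.+1 * s * (tcoef n k * s ^+ k * x ^+ (n - 2 * k)).
Proof.
rewrite tcoefSS (_ : n.+2 - 2 * k.+1 = n - 2 * k)%N; last by lia.
have [k_lt | n_le] := ltnP (2 * k) n.
  by rewrite (_ : n - 2 * k = (n.+1 - 2 * k.+1).+1)%N; [rewrite !exprS; ring | lia].
by rewrite tcoef_small ?exprS; [ring | lia].
Qed.

Lemma Tpoly_sum x s n N : (n < 2 * N)%N ->
  Tpoly x s q n = \sum_(0 <= k < N) tcoef n k * s ^+ k * x ^+ (n - 2 * k).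
Proof.
elim/ltn_ind: n N => -[|[|n]] IHn [|N] // n_lt; rewrite big_nat_recl //.
- rewrite big1_seq => [|k _]; last by rewrite tcoef_small ?mul0r //; lia.
  by rewrite tcoef0 qpfact0 !mulr1 addr0.
- rewrite big1_seq => [|k _]; last by rewrite tcoef_small ?mul0r //; lia.
  by rewrite tcoef0 qpfact0 expr0 expr1 !mul1r addr0.
rewrite TpolySS (IHn n.+1 _ N.+1) ?(IHn n _ N) //; try lia.
rewrite big_nat_recl // (eq_bigr _ (fun k _ => tcoef_monomialSS x s n k)).
rewrite big_split /= -!mulr_sumr !tcoef0 qpfactS !muln0 !subn0 (exprS x n.+1) /=; ring.
Qed.

Lemma tcoef_ratioE n k : (2 * k <= n)%N ->
  tcoef n k =
    q ^+ (k ^ 2)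
    * ((\prod_(1 <= i < n) (1 + q ^+ i))
       / ((\prod_(1 <= i < k.+1) (1 + q ^+ i)) * (\prod_(n - k <= i < n) (1 + q ^+ i))))
    * qratio q n k * qbinom q (n - k) k.
Proof.
move=> k_le; have [n0 | n_gt0] := posnP n.
  rewrite n0 (_ : k = 0)%N; last by lia.
  by rewrite tcoef0 /qratio /qbinom /= !big_geq // qfact0 qpfact0 expr0; field.
have [j def_n] : exists j, n = (j + k).+1 by exists (n - k).-1; lia.
rewrite tcoefE // def_n /qratio /qbinom /=.
have -> : ((j + k).+1 - k = j.+1)%N by lia.
have -> : (j.+1 - k = (j + k).+1 - 2 * k)%N by lia.
rewrite (@big_cat_nat _ _ _ j.+1) /= -?/(qpfact j) -?/(qpfact k) ?qfactS; try lia.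
have prod_neq0 : \prod_(j.+1 <= i < (j + k).+1) (1 + q ^+ i) != 0.
  by rewrite prodf_seq_neq0; apply/allP => i _; apply: add1X_neq0.
by field; rewrite prod_neq0 qpfact_neq0 !qfact_neq0 qint_neq0.
Qed.

Lemma tcoef_prodE n k : (2 * k < n)%N ->
  tcoef n k =
    q ^+ (k ^ 2) * (\prod_(k.+1 <= i < n - k) (1 + q ^+ i))
    * qratio q n k * qbinom q (n - k) k.
Proof.
move=> k_lt; have [j ->] : exists j, n = (j + k + k).+1 by exists (n - 2 * k).-1; lia.
rewrite tcoefE /qratio /qbinom /=; try lia.
have -> : ((j + k + k).+1 - k = (j + k).+1)%N by lia.
have -> : ((j + k).+1 - k = j.+1)%N by lia.
have -> : ((j + k + k).+1 - 2 * k = j.+1)%N by lia.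
rewrite /qpfact (@big_cat_nat _ _ _ k.+1 1 (j + k).+1) /= -?/(qpfact k) ?qfactS; try lia.
by field; rewrite qpfact_neq0 !qfact_neq0 !qint_neq0.
Qed.

End QCalculus.

Theorem theorem2p5 (R : realFieldType) (q x s : R) (n : nat) (hq : q != -1) :
  Tpoly x s q n =
    \sum_(0 <= k < (n./2).+1)
      q ^+ (k ^ 2)%N
      * ((\prod_(1 <= i < n) (1 + q ^+ i))
         / ((\prod_(1 <= i < k.+1) (1 + q ^+ i))
            * (\prod_(n - k <= i < n) (1 + q ^+ i))))
      * qratio q n k * qbinom q (n - k) k * s ^+ k * x ^+ (n - 2 * k)
  /\
  Tpoly x s q n =
    \sum_(0 <= k < (n.+1)./2)
      q ^+ (k ^ 2)%N * (\prod_(k.+1 <= i < n - k) (1 + q ^+ i))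
      * qratio q n k * qbinom q (n - k) k * s ^+ k * x ^+ (n - 2 * k)
    + (if ~~ odd n then q ^+ ((n./2) ^ 2)%N * s ^+ (n./2) else 0).
Proof.
have -> : Tpoly x s q n = \sum_(0 <= k < (n./2).+1) tcoef q n k * s ^+ k * x ^+ (n - 2 * k).
  by apply: Tpoly_sum; lia.
split.
  by apply: eq_big_nat => k /andP[_ k_lt]; rewrite tcoef_ratioE //; lia.
have sum_prodE m : (2 * m <= n.+1)%N ->
    \sum_(0 <= k < m) tcoef q n k * s ^+ k * x ^+ (n - 2 * k) =
    \sum_(0 <= k < m) q ^+ (k ^ 2)%N * (\prod_(k.+1 <= i < n - k) (1 + q ^+ i))
      * qratio q n k * qbinom q (n - k) k * s ^+ k * x ^+ (n - 2 * k).
  by move=> m_le; apply: eq_big_nat => k /andP[_ k_lt]; rewrite tcoef_prodE //; lia.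
have [n_odd | n_even] := boolP (odd n).
  by rewrite addr0 (_ : (n.+1)./2 = (n./2).+1)%N ?sum_prodE //; lia.
have [m def_n] : exists m, n = (2 * m)%N by exists n./2; lia.
have -> : (n.+1)./2 = m by lia.
have -> : n./2 = m by lia.
rewrite big_nat_recr //= sum_prodE; last by lia.
rewrite (_ : n - 2 * m = 0)%N ?expr0 ?mulr1; last by lia.
by rewrite def_n tcoef_diag.
Qed.
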